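(* Let $n\ge3$. Every optimal solution $V$ of the program $(\Gamma)$ associated to the game $CL(n)$ has rank at least $(4n-8)/3$.
   Context: Graph games: for a finite simple graph $\mathcal{G}$ with totally ordered vertex set and $e\ge1$ edges, the XOR game $A_{\mathcal{G}}$ has columns indexed by vertices and, for each edge $\{i,j\}$ with $i<j$, the two rows $(e_i-e_j)/(4e)$ and $(e_i+e_j)/(4e)$. $CL(n)$ is $A_{\mathcal{G}}$ where $\mathcal{G}$ has as vertices the nonempty subsets $S\subseteq\{1,\dots,n\}$ (in a fixed total order), with an edge between distinct $S,T$ iff $|S||T|-|S\cap T|$ is odd (equivalently $Y_SY_T=-Y_TY_S$ in the Clifford algebra generated by $Y_1,\dots,Y_n$ with $Y_i^2=1$, $Y_iY_j=-Y_jY_i$, $Y_S=Y_{i_1}\cdots Y_{i_k}$ for $S=\{i_1<\dots<i_k\}$). For a game with cost matrix $G$ with columns indexed by a set $J$, $(\Gamma)$ is the problem of maximizing $\sum_i\sqrt{\sum_{j,k}G_{ij}G_{ik}V_{jk}}$ over real positive semidefinite $J\times J$ matrices $V$ with all diagonal entries equal to $1$. *)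

From HB Require Import structures.
From mathcomp Require Import all_boot all_order all_algebra.
Set Implicit Arguments. Unset Strict Implicit. Unset Printing Implicit Defensive.
Import Order.TTheory GRing.Theory Num.Theory.
Local Open Scope ring_scope.

(* A finite simple graph on the totally ordered vertex set 'I_m
   (order = the order of ordinals), given by a relation adj, assumed
   symmetric and irreflexive where relevant. *)

Definition graph_edges (m : nat) (adj : rel 'I_m) : seq ('I_m * 'I_m) :=
  [seq p : 'I_m * 'I_m <- [seq (i, j) | i <- enum 'I_m, j <- enum 'I_m]
   | (p.1 < p.2)%N && adj p.1 p.2 :> bool].

Definition graph_game_rows (R : fieldType) (m : nat) (adj : rel 'I_m)
  : seq 'rV[R]_m :=
  let E := graph_edges adj in
  let e := size E in
  flatten [seq [:: (4 * e)%:R^-1 *: (delta_mx 0 p.1 - delta_mx 0 p.2);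
                   (4 * e)%:R^-1 *: (delta_mx 0 p.1 + delta_mx 0 p.2)]
          | p <- E].

Definition gamma_obj (R : rcfType) (m : nat) (rows : seq 'rV[R]_m)
  (V : 'M[R]_m) : R :=
  \sum_(g <- rows) Num.sqrt ((g *m V *m g^T) 0 0).

Definition psd (R : realFieldType) (m : nat) (V : 'M[R]_m) : Prop :=
  V^T = V /\ forall x : 'rV[R]_m, 0 <= (x *m V *m x^T) 0 0.

Definition gamma_feasible (R : realFieldType) (m : nat) (V : 'M[R]_m) : Prop :=
  psd V /\ forall i, V i i = 1.

Definition gamma_optimal (R : rcfType) (m : nat) (rows : seq 'rV[R]_m)
  (V : 'M[R]_m) : Prop :=
  gamma_feasible V /\
  forall W : 'M[R]_m, gamma_feasible W -> gamma_obj rows W <= gamma_obj rows V.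

Definition CLvert (n : nat) := {S : {set 'I_n} | S != set0}.

Definition CLsize (n : nat) : nat := #|{: CLvert n}|.

Definition CLset (n : nat) (i : 'I_(CLsize n)) : {set 'I_n} :=
  val (@enum_val (CLvert n) predT i).

Definition CL_adj (n : nat) : rel 'I_(CLsize n) :=
  fun i j =>
    (i != j) &&
    odd (#|CLset i| * #|CLset j| - #|CLset i :&: CLset j|)%N.

Definition CL_rows (R : fieldType) (n : nat) : seq 'rV[R]_(CLsize n) :=
  graph_game_rows R (@CL_adj n).

From mathcomp Require Import all_boot all_order all_algebra.
From mathcomp Require Import sesquilinear ring lra zify.
Set Implicit Arguments. Unset Strict Implicit. Unset Printing Implicit Defensive.
Import Order.TTheory GRing.Theory Num.Theory.
Local Open Scope ring_scope.

(* An optimal V vanishes on every edge of the game graph: the two rows of an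
   edge {i, j} contribute sqrt (a - a V_ij) + sqrt (a + a V_ij) <= 2 sqrt a,
   with equality iff V_ij = 0, and the identity matrix attains equality on all
   edges at once.  For CL(n), writing e_S for the vertex S, this makes the
   e_{i} orthonormal for the form of V, orthogonal to every e_S with |S| = 3
   and i \notin S, and any two e_S, e_T with |S| = |T| = 3, |S :&: T| = 2
   orthogonal.  Hence rank V >= n, and for a pair P, projecting e_{k u P}
   orthogonally to e_{k} gives rank V >= n - 2 + #{k \notin P | g_P(k)^2 <> 1},
   where g_P(k) = V({k} u P, {k}).  For two pairs P, Q meeting in one point,
   Bessel's inequality forbids g_P(k)^2 = g_Q(k)^2 = 1, and adding the three
   rank bounds yields 3 rank V >= 4 n - 7. *)

Lemma sqrtrBD_leif (R : rcfType) (a b : R) : 0 <= a - b -> 0 <= a + b ->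
  Num.sqrt (a - b) + Num.sqrt (a + b) <= Num.sqrt a *+ 2 ?= iff (b == 0).
Proof.
move=> hB hD; have ha : 0 <= a by lra.
set s := Num.sqrt (a - b); set t := Num.sqrt (a + b); set u := Num.sqrt a.
have s_ge0 : 0 <= s := sqrtr_ge0 _.
have t_ge0 : 0 <= t := sqrtr_ge0 _.
rewrite -(mono_in_leif ler_sqr) ?nnegrE ?addr_ge0 ?mulrn_wge0 ?sqrtr_ge0 //.
have -> : (u *+ 2) ^+ 2 = (s + t) ^+ 2 + (s - t) ^+ 2.
  have -> : (s + t) ^+ 2 + (s - t) ^+ 2 = (s ^+ 2 + t ^+ 2) *+ 2 by ring.
  have -> : (u *+ 2) ^+ 2 = u ^+ 2 *+ 4 by ring.
  rewrite !sqr_sqrtr //; ring.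
split; first by rewrite lerDl sqr_ge0.
rewrite eq_sym -subr_eq0 addrC addKr sqrf_eq0 subr_eq0 eqr_sqrt //.
by apply/eqP/eqP => [|->]; [lra | rewrite subr0 addr0].
Qed.

Lemma card_sum_pred (T1 T2 : finType) (A : pred (T1 + T2)) :
  #|A| = (#|[pred i | A (inl i)]| + #|[pred j | A (inr j)]|)%N.
Proof. by rewrite -!sum1_card big_sumType. Qed.

Section FinsetCard.
Variable T : finType.

Lemma cards1I (x : T) (A : {set T}) : #|[set x] :&: A| = (x \in A).
Proof.
have [xA|xNA] := boolP (x \in A).
  by rewrite (setIidPl _) ?cards1 ?sub1set.
by rewrite disjoint_setI0 ?cards0 ?disjoints1.
Qed.

Lemma setU1I_neq (x y : T) (A : {set T}) : x != y -> (x |: A) :&: (y |: A) = A.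
Proof.
by move=> xy; rewrite -setUIl disjoint_setI0 ?set0U // disjoints1 inE.
Qed.
End FinsetCard.

Section FormOfMatrix.
Variables (R : fieldType) (N : nat) (V : 'M[R]_N).
Local Notation "''[' u , v ]" := (form idfun V u v) : ring_scope.
Local Notation "''[' u ]" := '[u, u] : ring_scope.

Lemma form_idfunE u v : '[u, v] = (u *m V *m v^T) 0 0.
Proof. by rewrite /form map_mx_id. Qed.

Lemma mulmx_form m1 m2 (X : 'M_(m1, N)) (Y : 'M_(m2, N)) i j :
  (X *m V *m Y^T) i j = '[row i X, row j Y].
Proof.
rewrite form_idfunE !mxE; apply: eq_bigr => k _.
by rewrite !mxE; congr (_ * _); apply: eq_bigr => l _; rewrite mxE.
Qed.

(* The Gram matrix of the anisotropic vectors of the family is diagonal and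
   invertible, and it factors through V. *)
Lemma card_anisotropic_orthogonal (I : finType) (f : I -> 'rV[R]_N) :
  (forall i j, i != j -> '[f i, f j] = 0) ->
  (#|[pred i | '[f i] != 0%R]| <= \rank V)%N.
Proof.
move=> f_orth; set A := [pred i | _].
pose X : 'M[R]_(#|A|, N) := \matrix_(p < #|A|) f (enum_val p).
have GX : X *m V *m X^T = diag_mx (\row_p '[f (enum_val p)]).
  apply/matrixP => p q; rewrite mulmx_form !mxE !rowK.
  have [<-|npq] := eqVneq p q; first by rewrite mulr1n.
  by rewrite mulr0n f_orth // (inj_eq enum_val_inj).
have GX_unit : X *m V *m X^T \in unitmx.
  rewrite unitmxE GX det_diag unitfE; apply/prodf_neq0 => p _.
  by rewrite mxE; apply: (enum_valP p).
rewrite -(mxrank_unit GX_unit).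
exact: leq_trans (mxrankM_maxl _ _) (mxrankM_maxr _ _).
Qed.

Hypothesis V_sym : V^T = V.

Lemma sym_sesqui : V \is (false, idfun : {rmorphism R -> R}).-sesqui.
Proof. by rewrite sesquiE expr0 scale1r map_mx_id ?V_sym. Qed.

Lemma form_sym u v : '[u, v] = '[v, u].
Proof. by rewrite (formC _ sym_sesqui) //= expr0 mul1r. Qed.

Lemma form_sqrB u v : '[u - v] = '[u] + '[v] - '[u, v] *+ 2.
Proof. by rewrite (formB _ sym_sesqui) //= expr0 mul1r mulr2n. Qed.

Lemma form_sqrD u v : '[u + v] = '[u] + '[v] + '[u, v] *+ 2.
Proof. by rewrite (formD _ sym_sesqui) //= expr0 mul1r mulr2n. Qed.

Lemma form_subZ u w : '[w] = 1 -> '[u - '[u, w] *: w] = '[u] - '[u, w] ^+ 2.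
Proof. by move=> w1; rewrite form_sqrB formZ formZr w1 /=; ring. Qed.

End FormOfMatrix.

Section PsdForm.
Variables (R : realFieldType) (N : nat) (V : 'M[R]_N).
Hypothesis V_psd : psd V.
Local Notation "''[' u , v ]" := (form idfun V u v) : ring_scope.
Local Notation "''[' u ]" := '[u, u] : ring_scope.

Lemma psd_form_ge0 u : 0 <= '[u].
Proof. by rewrite form_idfunE; apply: V_psd.2. Qed.

Lemma psd_bessel2 u w1 w2 : '[w1] = 1 -> '[w2] = 1 -> '[w1, w2] = 0 ->
  '[u, w1] ^+ 2 + '[u, w2] ^+ 2 <= '[u].
Proof.
move=> w1n w2n w12; have V_sym := V_psd.1.
set u1 := u - '[u, w1] *: w1.
have u1w2 : '[u1, w2] = '[u, w2].
  by rewrite formDl formNl formZl w12 mulr0 subr0.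
have := psd_form_ge0 (u1 - '[u1, w2] *: w2).
rewrite !form_subZ // u1w2; lra.
Qed.
End PsdForm.

Lemma gamma_feasible1 (R : realFieldType) (m : nat) :
  gamma_feasible (1%:M : 'M[R]_m).
Proof.
split; last by move=> i; rewrite mxE eqxx.
split=> [|x]; first exact: trmx1.
rewrite mulmx1 mxE; apply: sumr_ge0 => k _.
by rewrite !mxE -expr2 sqr_ge0.
Qed.

Section GraphGame.
Variables (R : rcfType) (m : nat) (adj : rel 'I_m).
Local Notation E := (graph_edges adj).

Let c : R := (4 * size E)%:R^-1.
Let a : R := c ^+ 2 *+ 2.

Section Feasible.
Variable W : 'M[R]_m.
Hypotheses (W_sym : W^T = W) (W_diag : forall i, W i i = 1).
Local Notation "''[' u ]" := (form idfun W u u) : ring_scope.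

Lemma form_edge_rowB i j : '[c *: ('e_i - 'e_j)] = a - a * W i j.
Proof. by rewrite formZ form_sqrB // !formee !W_diag /= /a; ring. Qed.

Lemma form_edge_rowD i j : '[c *: ('e_i + 'e_j)] = a + a * W i j.
Proof. by rewrite formZ form_sqrD // !formee !W_diag /= /a; ring. Qed.

Lemma gamma_obj_graphE :
  gamma_obj (graph_game_rows R adj) W =
  \sum_(p <- E) (Num.sqrt (a - a * W p.1 p.2) + Num.sqrt (a + a * W p.1 p.2)).
Proof.
rewrite /gamma_obj /graph_game_rows big_flatten big_map; apply: eq_bigr => p _.
by rewrite big_cons big_seq1 -!form_idfunE form_edge_rowB form_edge_rowD.
Qed.
End Feasible.

Lemma mem_graph_edges p : (p \in E) = (p.1 < p.2)%N && adj p.1 p.2.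
Proof.
rewrite mem_filter andb_idr //; case: p => i j _ /=.
by apply: (allpairs_f (fun i j => (i, j))); rewrite mem_enum.
Qed.

Lemma gamma_optimal_graph_edge0 V p :
  gamma_optimal (graph_game_rows R adj) V -> p \in E -> V p.1 p.2 = 0.
Proof.
case=> [[V_psd V_diag] V_opt] pE; have V_sym := V_psd.1.
have a_neq0 : a != 0.
  rewrite /a mulrn_eq0 /= sqrf_eq0 invr_eq0 pnatr_eq0 muln_eq0 /=.
  by rewrite size_eq0; apply: contraTneq pE => ->.
set h := fun q : 'I_m * 'I_m =>
  Num.sqrt (a - a * V q.1 q.2) + Num.sqrt (a + a * V q.1 q.2).
have h_leif q : h q <= Num.sqrt a *+ 2 ?= iff (a * V q.1 q.2 == 0).
  by apply: sqrtrBD_leif;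
    rewrite -?form_edge_rowB -?form_edge_rowD ?psd_form_ge0.
have obj1 :
    gamma_obj (graph_game_rows R adj) 1%:M = \sum_(q <- E) Num.sqrt a *+ 2.
  have [[sym1 _] diag1] := gamma_feasible1 R m.
  rewrite (gamma_obj_graphE sym1 diag1).
  rewrite big_seq [RHS]big_seq; apply: eq_bigr => q.
  rewrite mem_graph_edges => /andP[/ltn_eqF q12 _].
  by rewrite mxE -val_eqE /= q12 mulr0 subr0 addr0.
have objV := V_opt _ (gamma_feasible1 R m).
have : \sum_(q <- E) (Num.sqrt a *+ 2 - h q) == 0.
  rewrite eq_le sumr_ge0 ?andbT => [|q _]; last by rewrite subr_ge0 (h_leif q).
  by rewrite sumrB -obj1 -gamma_obj_graphE // subr_le0.
rewrite psumr_eq0 => [/allP/(_ p pE)|q _]; last by rewrite subr_ge0 (h_leif q).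
by rewrite subr_eq0 eq_sym (h_leif p) mulf_eq0 (negbTE a_neq0) => /eqP.
Qed.

Lemma gamma_optimal_graph_adj0 V i j : symmetric adj ->
  gamma_optimal (graph_game_rows R adj) V -> i != j -> adj i j -> V i j = 0.
Proof.
move=> adjC V_opt ij adj_ij.
have edge0 p := gamma_optimal_graph_edge0 (p := p) V_opt.
have [lt|gt|/val_inj eq] := ltngtP i j.
- by apply: (edge0 (i, j)); rewrite mem_graph_edges lt.
- have [[[V_sym _] _] _] := V_opt.
  by rewrite -V_sym mxE (edge0 (j, i)) // mem_graph_edges gt -adjC.
- by rewrite eq eqxx in ij.
Qed.
End GraphGame.

Lemma CL_adjC n : symmetric (@CL_adj n).
Proof. by move=> i j; rewrite /CL_adj eq_sym mulnC setIC. Qed.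

Definition CLvec (R : fieldType) n (S : {set 'I_n}) : 'rV[R]_(CLsize n) :=
  if insub S : option (CLvert n) is Some v then 'e_(enum_rank v) else 0.

Section CLOptimal.
Variables (R : rcfType) (n : nat) (V : 'M[R]_(CLsize n)).
Hypothesis V_opt : gamma_optimal (CL_rows R n) V.
Local Notation "''[' u , v ]" := (form idfun V u v) : ring_scope.
Local Notation "''[' u ]" := '[u, u] : ring_scope.
Local Notation e := (@CLvec R n).
Implicit Types S T P Q : {set 'I_n}.

Let V_psd : psd V. Proof. by case: V_opt => [[]]. Qed.
Let V_sym : V^T = V. Proof. exact: V_psd.1. Qed.

Lemma CLvec_norm S : S != set0 -> '[e S] = 1.
Proof.
rewrite /CLvec; case: insubP => [v _ _ _|/negPn-> //].
by rewrite formee; case: V_opt => [[_ ->]].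
Qed.

Lemma CLvec_orth S T :
  S != T -> odd (#|S| * #|T| - #|S :&: T|) -> '[e S, e T] = 0.
Proof.
rewrite /CLvec; case: insubP => [u _ uS|_]; last by rewrite form0l.
case: insubP => [w _ wT|_]; last by rewrite form0r.
move=> ST oddST; rewrite formee.
have uw : enum_rank u != enum_rank w.
  by rewrite (inj_eq enum_rank_inj) -(inj_eq val_inj) uS wT.
apply: (gamma_optimal_graph_adj0 (@CL_adjC n) V_opt uw).
by rewrite /CL_adj /CLset !enum_rankK uS wT uw.
Qed.

Let gamma P k : R := '[e (k |: P), e [set k]].
Let gamma_neq1 P := [set k | (k \notin P) && (gamma P k ^+ 2 != 1)].

Lemma CLvec1_norm i : '[e [set i]] = 1.
Proof. by rewrite CLvec_norm // -card_gt0 cards1. Qed.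

Lemma CLvecU1_norm P k : '[e (k |: P)] = 1.
Proof. by rewrite CLvec_norm //; apply/set0Pn; exists k; apply: setU11. Qed.

Lemma CLvec1_orth i j : i != j -> '[e [set i], e [set j]] = 0.
Proof.
move=> ij; apply: CLvec_orth; first by rewrite (inj_eq set1_inj).
by rewrite !cards1 cards1I inE (negbTE ij).
Qed.

Lemma CLvec1_orth3 l S : #|S| = 3%N -> l \notin S -> '[e [set l], e S] = 0.
Proof.
move=> S3 lS; apply: CLvec_orth; last by rewrite cards1 cards1I S3 (negbTE lS).
by apply/eqP => lS_eq; move: S3; rewrite -lS_eq cards1.
Qed.

Lemma CLvec_orth33 S T :
  #|S| = 3%N -> #|T| = 3%N -> #|S :&: T| = 2%N -> '[e S, e T] = 0.
Proof.
move=> S3 T3 ST2; apply: CLvec_orth; last by rewrite S3 T3 ST2.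
by apply/eqP => ST; move: ST2; rewrite ST setIid T3.
Qed.

Lemma CL_rank_ge_n : (n <= \rank V)%N.
Proof.
have := card_anisotropic_orthogonal CLvec1_orth.
suff -> : #|[pred i | '[e [set i]] != 0%R]| = n by [].
rewrite -[RHS]card_ord; apply: eq_card => i.
by rewrite inE CLvec1_norm oner_neq0.
Qed.

Section Pair.
Variable P : {set 'I_n}.
Hypothesis P2 : #|P| = 2%N.

Let proj k := e (k |: P) - gamma P k *: e [set k].

Let cardU1_pair k : k \notin P -> #|k |: P| = 3%N.
Proof. by rewrite cardsU1 P2 => ->. Qed.

Lemma form_CLvec1_proj i l :
  i \notin P -> l \notin P -> '[e [set i], proj l] = 0.
Proof.
move=> iP lP; rewrite formDr formNr formZr.
have [<-|il] := eqVneq i l.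
  by rewrite CLvec1_norm mulr1 /gamma form_sym ?subrr.
rewrite CLvec1_orth // mulr0 subr0 (CLvec1_orth3 (S := l |: P)) ?cardU1_pair //.
by rewrite !inE negb_or il.
Qed.

Lemma form_proj_orth k l :
  k != l -> k \notin P -> l \notin P -> '[proj k, proj l] = 0.
Proof.
move=> kl kP lP; rewrite formDl formNl formZl form_CLvec1_proj // mulr0 subr0.
rewrite formDr formNr formZr [in X in _ * X]form_sym //.
rewrite CLvec1_orth3 ?cardU1_pair //; last by rewrite !inE negb_or eq_sym kl.
by rewrite CLvec_orth33 ?cardU1_pair ?setU1I_neq // mulr0 subr0.
Qed.

Lemma form_proj_norm k : '[proj k] = 1 - gamma P k ^+ 2.
Proof. by rewrite form_subZ ?CLvec1_norm ?CLvecU1_norm. Qed.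

Lemma CL_rank_pair : (n - 2 + #|gamma_neq1 P| <= \rank V)%N.
Proof.
pose f j := match j with
  | inl i => if i \in P then 0 else e [set i]
  | inr k => if k \in P then 0 else proj k end.
have := @card_anisotropic_orthogonal _ _ V _ f.
rewrite card_sum_pred.
have -> : #|[pred i | '[f (inl i)] != 0%R]| = #|~: P|.
  apply: eq_card => i; rewrite !inE /=.
  by case: (i \in P); rewrite ?form0l ?eqxx ?CLvec1_norm ?oner_neq0.
rewrite cardsCs setCK card_ord P2.
have -> : #|[pred k | '[f (inr k)] != 0%R]| = #|gamma_neq1 P|.
  apply: eq_card => k; rewrite !inE /=; case: (k \in P) => /=.
    by rewrite form0l eqxx.
  by rewrite form_proj_norm subr_eq0 eq_sym.
apply=> -[i|k] [j|l] ij /=; case: ifP => iP; rewrite ?form0l //;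
  case: ifP => jP; rewrite ?form0r //.
- by rewrite CLvec1_orth //; apply: contraNneq ij => ->.
- by rewrite form_CLvec1_proj ?iP ?jP.
- by rewrite form_sym // form_CLvec1_proj ?iP ?jP.
- by rewrite form_proj_orth ?iP ?jP //; apply: contraNneq ij => ->.
Qed.
End Pair.

Lemma CL_gamma_sqr_neq1 P Q k : #|P| = 2%N -> #|Q| = 2%N -> #|P :&: Q| = 1%N ->
  k \notin P -> k \notin Q -> (gamma P k ^+ 2 != 1) || (gamma Q k ^+ 2 != 1).
Proof.
move=> P2 Q2 PQ1 kP kQ.
have tPQ : '[e (k |: P), e (k |: Q)] = 0.
  rewrite CLvec_orth33 // ?cardsU1 ?P2 ?Q2 ?kP ?kQ //.
  by rewrite -setUIr cardsU1 PQ1 inE (negbTE kP).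
have := psd_bessel2 V_psd (e [set k]) (CLvecU1_norm P k) (CLvecU1_norm Q k) tPQ.
rewrite CLvec1_norm -!(form_sym V_sym (e (k |: _))) -negb_and.
by apply: contraTN => /andP[/eqP-> /eqP->]; rewrite -ltNge ltrDl ltr01.
Qed.

Lemma CL_rank_bound P Q : #|P| = 2%N -> #|Q| = 2%N -> #|P :&: Q| = 1%N ->
  (4 * n - 8 <= 3 * \rank V)%N.
Proof.
move=> P2 Q2 PQ1.
have cover : ~: (P :|: Q) \subset gamma_neq1 P :|: gamma_neq1 Q.
  apply/subsetP => k; rewrite !inE negb_or => /andP[kP kQ].
  by rewrite kP kQ; apply: CL_gamma_sqr_neq1.
have := cardsC (P :|: Q); rewrite cardsU P2 Q2 PQ1 card_ord.
have := subset_leq_card cover.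
have := (leq_card_setU (gamma_neq1 P) (gamma_neq1 Q)).1.
have := CL_rank_pair P2; have := CL_rank_pair Q2; have := CL_rank_ge_n.
lia.
Qed.
End CLOptimal.

Theorem proposition7p3 (R : rcfType) (n : nat) (hn : (3 <= n)%N)
  (V : 'M[R]_(CLsize n)) :
  gamma_optimal (CL_rows R n) V ->
  (4 * n - 8 <= 3 * \rank V)%N.
Proof.
move=> V_opt.
pose a : 'I_n := Ordinal (leq_trans (isT : 1 <= 3)%N hn).
pose b : 'I_n := Ordinal (leq_trans (isT : 2 <= 3)%N hn).
pose c : 'I_n := Ordinal hn.
apply: (CL_rank_bound V_opt (P := b |: [set a]) (Q := c |: [set a])).
- by rewrite cardsU1 cards1 inE.
- by rewrite cardsU1 cards1 inE.
- by rewrite setU1I_neq ?cards1.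
Qed.
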